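(* $\mathcal{U}_2^m(\mathfrak{N})=\mathbb{N}_{\ge 2}$.
   Context: $\mathbb{N}$ denotes the non-negative integers and $\mathbb{N}_{\ge2}$ the set of integers greater than one. A numerical semigroup is a submonoid of $(\mathbb{N},+)$ with finite complement; $\mathfrak{N}$ denotes the set of all numerical semigroups. A numerical semigroup is irreducible if it cannot be written as the intersection of two numerical semigroups properly containing it. Given a numerical semigroup $S$ and irreducible numerical semigroups $S_1,\dots,S_n$, the expression $S_1\cap\dots\cap S_n$ is a factorization of $S$ (of length $n$) if $S=S_1\cap\dots\cap S_n$ and $S\neq\bigcap_{j\in J}S_j$ for every nonempty proper subset $J\subsetneq\{1,\dots,n\}$. For a positive integer $k$, $\mathcal{U}_k^m(\mathfrak{N})$ is the set of positive integers $l$ such that there exists a numerical semigroup having a factorization of length $k$ and a factorization of length $l$. *)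

From mathcomp Require Import all_boot.
Set Implicit Arguments. Unset Strict Implicit. Unset Printing Implicit Defensive.

Definition nset := nat -> Prop.

Definition nset_eq (A B : nset) : Prop := forall x, A x <-> B x.
Definition nset_sub (A B : nset) : Prop := forall x, A x -> B x.
Definition nset_proper (A B : nset) : Prop := nset_sub A B /\ ~ nset_eq A B.
Definition nset_cap (A B : nset) : nset := fun x => A x /\ B x.

Definition numerical_semigroup (S : nset) : Prop :=
  S 0 /\ (forall a b, S a -> S b -> S (a + b)) /\
  (exists N, forall x, N <= x -> S x).

Definition irreducible_ns (S : nset) : Prop :=
  numerical_semigroup S /\
  ~ (exists T1 T2, numerical_semigroup T1 /\ numerical_semigroup T2 /\
       nset_proper S T1 /\ nset_proper S T2 /\ nset_eq S (nset_cap T1 T2)).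

Definition big_cap n (F : 'I_n -> nset) (J : {set 'I_n}) : nset :=
  fun x => forall j, j \in J -> F j x.

Definition is_factorization (S : nset) n (F : 'I_n -> nset) : Prop :=
  (forall i, irreducible_ns (F i)) /\
  nset_eq S (big_cap F setT) /\
  (forall J : {set 'I_n}, J != set0 -> J \proper setT -> ~ nset_eq S (big_cap F J)).

Definition has_factorization_of_length (S : nset) (n : nat) : Prop :=
  exists F : 'I_n -> nset, is_factorization S F.

Definition U_m (k : nat) : nat -> Prop :=
  fun l => 0 < l /\ exists S, numerical_semigroup S /\
     has_factorization_of_length S k /\ has_factorization_of_length S l.

(* A factorization of length one says that S is irreducible, while one of
   length at least two exhibits S as the intersection of one factor with the
   intersection of the others, both proper oversemigroups; hence 1 is not in
   U_2. Conversely, for l >= 2 the semigroup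
   S_l = {0} ∪ {x >= 2l | x even or x >= 4l} is both
   ({0} ∪ [2l,∞) \ {4l-1}) ∩ (evens ∪ [4l,∞)) and the intersection of the l
   semigroups {0} ∪ [k,∞) \ {2k-1}, l < k <= 2l, each of which removes exactly
   one odd number of [2l, 4l). All factors are irreducible because any proper
   oversemigroup contains their Frobenius number. *)

From mathcomp Require Import all_boot zify.
From Stdlib Require Import Classical.

Lemma numerical_semigroup_eq (S S' : nset) :
  nset_eq S S' -> numerical_semigroup S -> numerical_semigroup S'.
Proof.
move=> eqS [S0 [Sadd [N SN]]]; split; first exact/eqS.
split; last by exists N => x /SN /eqS.
by move=> a b /eqS Sa /eqS Sb; apply/eqS/Sadd.
Qed.

Lemma irreducible_ns_eq (S S' : nset) :
  nset_eq S S' -> irreducible_ns S -> irreducible_ns S'.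
Proof.
move=> eqS [NS irrS]; split; first exact: numerical_semigroup_eq NS.
move=> [T1 [T2 [NT1 [NT2 [[sub1 neq1] [[sub2 neq2] eqT]]]]]].
apply: irrS; exists T1, T2; do 2!split=> //.
split; first split.
- by move=> x /eqS /sub1.
- by move=> eq1; apply: neq1 => x; rewrite -eq1 eqS.
split; first split.
- by move=> x /eqS /sub2.
- by move=> eq2; apply: neq2 => x; rewrite -eq2 eqS.
by move=> x; rewrite eqS eqT.
Qed.

Lemma big_cap_numerical_semigroup n (F : 'I_n -> nset) (J : {set 'I_n}) :
  (forall i, numerical_semigroup (F i)) -> numerical_semigroup (big_cap F J).
Proof.
move=> NF; split; first by move=> j _; case: (NF j).
split=> [a b Fa Fb j Jj|]; first by case: (NF j) => _ [Fadd _]; apply: Fadd; auto.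
have [N FN] : exists N : 'I_n -> nat, forall i x, N i <= x -> F i x.
  apply: (@fin_all_exists _ (fun=> nat) (fun i N => forall x, N <= x -> F i x)).
  by move=> i; case: (NF i) => _ [].
exists (\max_i N i) => x Nx j _; apply: FN.
exact: leq_trans (leq_bigmax j) Nx.
Qed.

(* The hypotheses say that S is symmetric or pseudo-symmetric with Frobenius
   number f. *)
Section FrobeniusCriterion.

Variables (S : nset) (f : nat).
Hypotheses (NS : numerical_semigroup S) (Sf : ~ S f)
  (S_gt_f : forall x, f < x -> S x)
  (gap_pair : forall x, x < f -> ~ S x -> S (f - x) \/ x + x = f).

Lemma oversemigroup_frobenius (T : nset) :
  numerical_semigroup T -> nset_proper S T -> T f.
Proof.
move=> [_ [Tadd _]] [subST neqST]; apply: NNPP => Tf.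
apply: neqST => y; split; first exact: subST.
move=> Ty; apply: NNPP => Sy.
have [y_lt_f|y_gt_f|y_eq_f] := ltngtP y f.
- case: (gap_pair _ y_lt_f Sy) => [Sfy|dbl]; last by apply: Tf; rewrite -dbl; apply: Tadd.
  by apply: Tf; have := Tadd _ _ Ty (subST _ Sfy); rewrite subnKC // ltnW.
- exact/Sy/S_gt_f.
- by apply: Tf; rewrite -y_eq_f.
Qed.

Lemma irreducible_of_frobenius : irreducible_ns S.
Proof.
split=> // -[T1 [T2 [NT1 [NT2 [pT1 [pT2 eqS]]]]]].
by apply/Sf/eqS; split; apply: oversemigroup_frobenius.
Qed.

End FrobeniusCriterion.

Lemma factorization1_irreducible {S : nset} :
  has_factorization_of_length S 1 -> irreducible_ns S.
Proof.
move=> [F [irrF [eqS _]]]; apply: irreducible_ns_eq (irrF ord0) => x.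
rewrite eqS; split=> [Fx j _|]; first by rewrite (ord1 j).
by apply; rewrite inE.
Qed.

Lemma big_cap_set1 n (F : 'I_n -> nset) i : nset_eq (big_cap F [set i]) (F i).
Proof. by move=> x; split=> [|Fx j /set1P ->]; last done; apply; apply: set11. Qed.

Lemma factorization_reducible {S : nset} {n} :
  has_factorization_of_length S n -> 1 < n -> ~ irreducible_ns S.
Proof.
move=> [F [irrF [eqS minF]]] n_gt1 [_ irrS].
pose i0 : 'I_n := Ordinal (ltnW n_gt1).
have [i1 i1_neq] : exists i1 : 'I_n, i1 != i0.
  by exists (Ordinal n_gt1); rewrite -val_eqE.
have nonempty (J : {set 'I_n}) j : j \in J -> J != set0.
  by move=> Jj; apply/set0Pn; exists j.
have not_full (J : {set 'I_n}) j : j \notin J -> J \proper setT.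
  by move=> Jj; rewrite properT; apply: contraNneq Jj => ->; rewrite inE.
have proper_sub (J : {set 'I_n}) j j' : j \in J -> j' \notin J ->
    nset_proper S (big_cap F J).
  move=> Jj Jj'; split; last exact: minF (nonempty _ _ Jj) (not_full _ _ Jj').
  by move=> x /eqS Sx k _; apply: Sx; rewrite inE.
apply: irrS; exists (F i0), (big_cap F (~: [set i0])).
split; first by case: (irrF i0).
split; first by apply: big_cap_numerical_semigroup => i; case: (irrF i).
split.
  have [sub neq] : nset_proper S (big_cap F [set i0]).
    by apply: (proper_sub _ i0 i1); rewrite !inE ?eqxx.
  split=> [x /sub /big_cap_set1 //|eq0].
  by apply: neq => x; rewrite big_cap_set1.
split; first by apply: (proper_sub _ i1 i0); rewrite !inE ?eqxx.
move=> x; rewrite eqS; split=> [Fx|[F0x Fx] j _].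
  by split=> [|j _]; apply: Fx; rewrite inE.
have [-> //|j_neq] := eqVneq j i0.
by apply: Fx; rewrite !inE j_neq.
Qed.

Lemma factorization_numerical_semigroup (S : nset) n (F : 'I_n -> nset) :
  is_factorization S F -> numerical_semigroup S.
Proof.
move=> [irrF [eqS _]]; apply: (@numerical_semigroup_eq (big_cap F setT)).
  by move=> x; rewrite eqS.
by apply: big_cap_numerical_semigroup => i; case: (irrF i).
Qed.

Lemma factorization_of_witnesses (S : nset) n (F : 'I_n -> nset) :
  (forall i, irreducible_ns (F i)) -> nset_eq S (big_cap F setT) ->
  (forall i, exists x, ~ S x /\ forall j, j != i -> F j x) ->
  is_factorization S F.
Proof.
move=> irrF eqS wit; do 2!split=> //.
move=> J _ /properP [_ [i _ iJ]] eqJ.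
have [x [Sx Fx]] := wit i; apply/Sx/eqJ => j Jj; apply: Fx.
by apply: contraNneq iJ => <-.
Qed.

Lemma ord2_cases (j : 'I_2) : j = ord0 \/ j = ord_max.
Proof. by case: j => -[|[|//]] ?; [left|right]; apply: val_inj. Qed.

Definition punctured_ordinary (k : nat) : nset :=
  fun x => x = 0 \/ (k <= x /\ x <> 2 * k - 1).

Definition even_or_large (m : nat) : nset := fun x => ~~ odd x \/ 2 * m <= x.

Definition witness_semigroup (l : nat) : nset :=
  fun x => x = 0 \/ (2 * l <= x /\ (~~ odd x \/ 4 * l <= x)).

Lemma punctured_ordinary_irreducible k :
  0 < k -> irreducible_ns (punctured_ordinary k).
Proof.
rewrite /punctured_ordinary => k_gt0.
apply: (@irreducible_of_frobenius _ (2 * k - 1)); try (move=> *; lia).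
split; first by left.
split; last by exists (2 * k) => x ?; right; lia.
by move=> a b [->|?] [->|?]; [left|right|right|right]; lia.
Qed.

Lemma even_or_large_irreducible m :
  0 < m -> irreducible_ns (even_or_large m).
Proof.
rewrite /even_or_large => m_gt0.
apply: (@irreducible_of_frobenius _ (2 * m - 1)); try (move=> *; lia).
split; first by left.
split; last by exists (2 * m) => x; right.
by move=> a b [?|?] [?|?]; [left|right|right|right]; lia.
Qed.

Lemma witness_factorization2 {l} :
  2 <= l -> has_factorization_of_length (witness_semigroup l) 2.
Proof.
move=> l_ge2.
exists (fun j : 'I_2 => if j == ord0 then punctured_ordinary (2 * l)
                        else even_or_large (2 * l)).
apply: factorization_of_witnesses.
- move=> i; case: (ord2_cases i) => -> /=.
    by apply: punctured_ordinary_irreducible; lia.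
  by apply: even_or_large_irreducible; lia.
- move=> x; rewrite /witness_semigroup /punctured_ordinary /even_or_large.
  split=> [Sx j _|Fx].
    by case: (ord2_cases j) => -> /=; lia.
  by have := Fx ord0 (in_setT _); have := Fx ord_max (in_setT _) => /=; lia.
- move=> i; case: (ord2_cases i) => ->; [exists 2|exists (2 * l + 1)].
  all: rewrite /witness_semigroup /punctured_ordinary /even_or_large.
  all: by split=> [|j]; [lia|case: (ord2_cases j) => -> //= _; lia].
Qed.

Lemma witness_factorization_self l :
  0 < l -> has_factorization_of_length (witness_semigroup l) l.
Proof.
move=> l_gt0; exists (fun j : 'I_l => punctured_ordinary (l + j + 1)).
apply: factorization_of_witnesses.
- by move=> i; apply: punctured_ordinary_irreducible; lia.
- rewrite /witness_semigroup /punctured_ordinary => x.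
  split=> [Sx j _|Fx]; first by have := ltn_ord j; lia.
  have last_lt : l.-1 < l by lia.
  have := Fx (Ordinal last_lt) (in_setT _) => /= -[->|[x_ge _]].
    by left.
  right; split; first lia.
  case: (leqP (4 * l) x) => [|x_lt]; first by right.
  left; apply/negP => x_odd.
  (* x is the Frobenius number of the factor with k = x./2 + 1. *)
  have q_lt : x./2 - l < l by lia.
  by have := Fx (Ordinal q_lt) (in_setT _) => /=; lia.
- move=> i; exists (2 * l + 2 * i + 1); have := ltn_ord i.
  rewrite /witness_semigroup /punctured_ordinary; split; first lia.
  move=> j; rewrite -val_eqE /= => j_neq; have := ltn_ord j; lia.
Qed.

Theorem mainTheorem7 : forall l : nat, U_m 2 l <-> 2 <= l.
Proof.
move=> l; split.
- move=> [l_gt0 [S [_ [fact2 factl]]]].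
  case: (leqP 2 l) => // l_lt2.
  have l1 : l = 1 by lia.
  rewrite l1 in factl.
  by case: (factorization_reducible fact2 isT (factorization1_irreducible factl)).
- move=> l_ge2; split; first lia.
  have [F factF] := witness_factorization2 l_ge2.
  exists (witness_semigroup l).
  split; first exact: factorization_numerical_semigroup factF.
  split; first by exists F.
  by apply: witness_factorization_self; lia.
Qed.
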